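(* Let $\sigma$ be a uniform substitution, $\alpha$ a program, $U\subseteq\mathcal V\cup\Omega$, $I$ an interpretation and $w$ a state. Suppose $\sigma^{U,\emptyset}(\alpha)$ is defined with output taboo $V$, $v$ is a $U$-variation of $w$, and $(v,\tau,o)\in[\![\alpha]\!]^{\sigma^*_wI}$ with $o\neq\bot$. Then $o\cdot\tau$ is a $V$-variation of $w$.
   Context: Setting (dLCHP). Variables and channels. Variables are $\mathcal V=\mathcal V_{\mathbb R}\cup\mathcal V_{\mathbb N}\cup\mathcal V_{\mathcal T}$ (real, integer and trace variables). Each $x\in\mathcal V_{\mathbb R}$ has a differential symbol $x'\in\mathcal V_{\mathbb R}$. The variable $\mu\in\mathcal V_{\mathbb R}$ is the designated global time. $\Omega$ is the set of channel names. All channel sets and variable sets occurring in the syntax are finite or cofinite. $S^\complement$ denotes the complement of $S$. Syntax of terms. Terms have four sorts: - real terms $\theta::=x\mid f(\bar{ch},\bar e)\mid\theta_1+\theta_2\mid\theta_1\cdot\theta_2\mid(\eta)'\mid\mathrm{val}(te)\mid\mathrm{time}(te)$; - integer terms $\iota::=n\mid f(\bar{ch},\bar e)\mid\iota_1+\iota_2\mid|te|$; - channel terms $f(\bar{ch},\bar e)\mid\mathrm{chan}(te)$; - trace terms $te::=h\mid f(\bar{ch},\bar e)\mid\langle ch,\eta_1,\eta_2\rangle\mid te_1\cdot te_2\mid te\downarrow C\mid te[\iota]$. Here $\eta,\eta_i$ are polynomials with rational coefficients in real variables. $f(\bar{ch},\bar e)$ is a function symbol (including constants) annotated with a channel set $\bar{ch}\subseteq\Omega$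 and applied to terms $\bar e$. Operators such as $+,\cdot,\downarrow C$ are built-in. Syntax of programs. $\alpha,\beta::=a^{\bar z}_{\bar{ch}}\mid x:=\eta\mid x:=*\mid ?\chi\mid\{x'=\eta\,\&\,\chi\}\mid\alpha;\beta\mid\alpha\cup\beta\mid\alpha^*\mid ch(h)!\eta\mid ch(h)?x\mid\alpha\parallel\beta$. Here $\chi$ is a first-order real-arithmetic formula. $a^{\bar z}_{\bar{ch}}$ is a program constant allowed to write only channels in $\bar{ch}$ and to bind only variables in $\bar z\subseteq\mathcal V_{\mathbb R}\cup\mathcal V_{\mathcal T}$. Syntax of formulas. $\phi,\psi,A,C::=e_1\sim e_2\mid p(\bar{ch},\bar e)\mid\neg\phi\mid\phi\wedge\psi\mid\forall z\,\phi\mid[\alpha]\psi\mid[\alpha]\{A,C\}\psi$. Here $\sim$ ranges over $=$, $\ge$ and trace prefix $\preceq$, and $p$ is a predicate symbol. Well-formedness (context-sensitive syntax). In every $\alpha\parallel\beta$ we require $BV(\alpha)\cap BV(\beta)\subseteq\{\mu,\mu'\}\cup\mathcal V_{\mathcal T}$. In every $[\alpha]\{A,C\}\psi$ we require $(FV(A)\cup FV(C))\cap BV(\alpha)\subseteq\mathcal V_{\mathcal T}$. Traces and states. - A trace is a finite sequence of events $\langle ch,d,s\rangle$ with $ch\in\Omega$, $d\in\mathbb R$ (value) and $s\in\mathbb R$ (timestamp), with strictly increasing timestamps. - A recorded trace additionally tags each event with a trace variable $h$. - $\epsilon$ is the empty trace; $\preceq$ is prefix and $\prec$ is strict prefix.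 - A state $v$ maps each variable to a value of its type (real, natural number or trace). $v[z\mapsto d]$ is the modified state. - $v\cdot\tau$ (for a recorded trace $\tau$) appends to each $v(h)$ the subsequence of untagged events of $\tau$ tagged with $h$. - $\tau\downarrow C$ is the subsequence of events whose channel lies in $C$. - $v\downarrow C$ replaces $v(h)$ by $v(h)\downarrow C$ for every $h\in\mathcal V_{\mathcal T}$. - ''$v=u$ on $S$'' means that $v$ and $u$ agree on every variable in $S$. Computations. A computation is $(v,\tau,w)$ where $v$ is a state, $\tau$ a recorded trace, and $w$ a state or $\bot$ (unfinished). The prefix order on computation outcomes is: $(\tau',w')\preceq(\tau,w)$ iff either ($w'=\bot$ and $\tau'\preceq\tau$) or $(\tau',w')=(\tau,w)$. Interpretations. An interpretation $I$ assigns: - to function symbols, functions of matching sorts (smooth in real arguments if real-valued); - to predicate symbols, relations; - to each program constant $a^{\bar z}_{\bar{ch}}$, a prefix-closed set of chronological computations that contains all $(v,\epsilon,\bot)$, such that each $(v,\tau,w)$ in it satisfies $\tau\downarrow\bar{ch}^\complement=\epsilon$, $v=w$ on $\mathcal V_{\mathcal T}$, and $w\cdot\tau=v$ on $\bar z^\complement$. Term semantics. - Variables: $Iv[\![z]\!]=v(z)$. - Function symbols: $Iv[\![f(\bar{ch},e_1,\dots,e_k)]\!]=I(f)(I\tilde v[\![e_1]\!],\dots,I\tilde v[\![e_k]\!])$ where $\tilde v=v\downarrow\bar{ch}$. - Built-ins are evaluated pointwise. - Differentials: $Iv[\![(\eta)']\!]=\sum_x v(x')\,\partial Iv[\![\eta]\!]/\partial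 x$. Program semantics $[\![\alpha]\!]^I$. Let $\Lambda=\{(v,\epsilon,\bot)\}$ (all states $v$). - $[\![a^{\bar z}_{\bar{ch}}]\!]^I=I(a^{\bar z}_{\bar{ch}})$. - $x:=\eta$ gives $\Lambda\cup\{(v,\epsilon,v[x\mapsto Iv[\![\eta]\!]])\}$. - $x:=*$ gives $\Lambda\cup\{(v,\epsilon,v[x\mapsto d]):d\in\mathbb R\}$. - $?\chi$ gives $\Lambda\cup\{(v,\epsilon,v):I,v\models\chi\}$. - $\{x'=\eta\&\chi\}$ gives $\Lambda$ together with all $(v,\epsilon,\varphi(s))$ for solutions $\varphi:[0,s]\to$ states of $\mu'=1,x'=\eta$ that satisfy $\chi$ throughout, keep all variables other than $x,x',\mu,\mu'$ constant, and have $\varphi(0)=v$ except on $\{x',\mu'\}$. - $ch(h)!\eta$ gives all $(v,\tau,w)$ with $(\tau,w)\preceq(\langle h,ch,Iv[\![\eta]\!],v(\mu)\rangle,v)$. - $ch(h)?x$ gives all $(v,\tau,w)$ with $(\tau,w)\preceq(\langle h,ch,d,v(\mu)\rangle,v[x\mapsto d])$ for some $d\in\mathbb R$. - $\alpha\cup\beta$ is the union of the two semantics. - $\alpha;\beta$ is $\{(v,\tau,\bot):(v,\tau,w)\in[\![\alpha]\!]^I\}\cup\{(v,\tau_1\tau_2,w):(v,\tau_1,u)\in[\![\alpha]\!]^I,(u,\tau_2,w)\in[\![\beta]\!]^I\}$. - $\alpha^*$ is $\bigcup_n[\![\alpha^n]\!]^I$ with $\alpha^0=?\mathit{true}$. -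 $\alpha_1\parallel\alpha_2$ gives all $(v,\tau,w_1\oplus w_2)$ such that: $(v,\tau\downarrow\alpha_j,w_j)\in[\![\alpha_j]\!]^I$ for $j=1,2$, where $\tau\downarrow\alpha_j$ is the projection onto the communication of $\alpha_j$; the final global times of $w_1$ and $w_2$ agree; and $\tau$ contains only communication of $\alpha_1$ or $\alpha_2$. Here $w_1\oplus w_2$ is $\bot$ if either is $\bot$, and otherwise equals $w_1$ on $BV(\alpha_1)$ and $w_2$ elsewhere. Formula semantics. - $I,v\models e_1\sim e_2$ iff the values are related by $\sim$. - $I,v\models p(\bar{ch},\bar e)$ iff $(I\tilde v[\![\bar e]\!])\in I(p)$ with $\tilde v=v\downarrow\bar{ch}$. - $\neg$ and $\wedge$ are classical. - $\forall z\phi$ quantifies over all values of the type of $z$. - $I,v\models[\alpha]\psi$ iff $I,w\cdot\tau\models\psi$ for all $(v,\tau,w)\in[\![\alpha]\!]^I$ with $w\ne\bot$. - $I,v\models[\alpha]\{A,C\}\psi$ iff for all $(v,\tau,w)\in[\![\alpha]\!]^I$ both hold: - (commit) if $I,v\cdot\sigma\models A$ for all $\sigma\prec\tau$, then $I,v\cdot\tau\models C$; - (post) if $I,v\cdot\sigma\models A$ for all $\sigma\preceq\tau$ and $w\neq\bot$, then $I,w\cdot\tau\models\psi$. Static semantics. Formulas are treated as truth-valued expressions. - $FV(e)$ (for a term or formula $e$) is the set of $z\in\mathcal V$ such that some $I,v,\tilde v$ with $v=\tilde v$ on $\{z\}^\complement$ give different values of $e$. - $CN(e)$ is the set of $ch\in\Omega$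 such that some $I,v,\tilde v$ with $v\downarrow\{ch\}^\complement=\tilde v\downarrow\{ch\}^\complement$ give different values of $e$. - For a program $\alpha$, $FV(\alpha)$ is the set of $z$ for which there exist $I,v,\tilde v,\tau,w$ with $v=\tilde v$ on $\{z\}^\complement$ and $(v,\tau,w)\in[\![\alpha]\!]^I$, but no $(\tilde v,\tau,\tilde w)\in[\![\alpha]\!]^I$ with $\tilde w=w$ on $\{z\}^\complement$ (in particular $\tilde w=\bot$ iff $w=\bot$). - $BV(\alpha)$ is the set of $z$ such that some $I$ and $(v,\tau,w)\in[\![\alpha]\!]^I$ with $w\ne\bot$ satisfy $(w\cdot\tau)(z)\ne v(z)$. - $CN(\alpha)$ is the set of $ch$ such that some $I$ and $(v,\tau,w)\in[\![\alpha]\!]^I$ satisfy $\tau\downarrow\{ch\}\neq\epsilon$. - $V(\alpha)=FV(\alpha)\cup BV(\alpha)$. Uniform substitution. A uniform substitution $\sigma$ maps: - function symbols $f$ to terms $\sigma f(\cdot)$ of the same sort, in which the reserved nullary symbol $\cdot$ marks the argument position (symbols only usable inside programs are mapped to polynomials); - predicate symbols $p$ to formulas $\sigma p(\cdot)$ (those used in program tests are mapped to first-order real arithmetic); - program constants $a$ to programs $\sigma a$. All other symbols are left unchanged. The application is a partial operation; whenever a side condition fails, the result is undefined (''clash''), and undefinedness propagates. Terms and formulas, with taboo set $U\subseteq\mathcal V\cup\Omega$: - $\sigma^U(z)=z$ for variables $z$. - $\sigma^U(f(\bar{ch},e))$ is the result of replacing $\cdot$ in $\sigma f(\cdot)$ by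 $\sigma^U(e\downarrow\bar{ch})$. This is defined only if $(FV(\sigma f(\cdot))\cup CN(\sigma f(\cdot)))\cap U=\emptyset$. Here $e\downarrow\bar{ch}$ pushes the projection onto $\bar{ch}$ into $e$, e.g. $q(\bar{ch}_0,e')\downarrow\bar{ch}=q(\bar{ch}_0\cap\bar{ch},e')$. - $\sigma^U$ is homomorphic on built-in operators, on $\sim$, on $\neg$ and on $\wedge$. - $\sigma^U((\eta)')=(\sigma^{\mathcal V\cup\Omega}(\eta))'$. - $\sigma^U(p(\bar{ch},e))$ is analogous to the function symbol case. - $\sigma^U(\forall z\phi)=\forall z\,\sigma^{U\cup\{z\}}(\phi)$. - $\sigma^U([\alpha]\psi)=[\sigma^{U,\emptyset}(\alpha)]\sigma^V(\psi)$ and $\sigma^U([\alpha]\{A,C\}\psi)=[\sigma^{U,\emptyset}(\alpha)]\{\sigma^V(A),\sigma^V(C)\}\sigma^V(\psi)$, where $V$ is the output taboo of $\sigma^{U,\emptyset}(\alpha)$. Programs, with input taboo $U$ and parallel context $\Pi\subseteq\mathcal V$, yielding a result $\sigma^{U,\Pi}(\alpha)$ and an output taboo $V$: - $a^{\bar z}_{\bar{ch}}$: result $\sigma a$, output $U\cup BV(\sigma a)\cup CN(\sigma a)$; defined only if $BV(\sigma a)\subseteq\bar z$ and $CN(\sigma a)\subseteq\bar{ch}$. - $x:=\eta$: result $x:=\sigma^{U\cup\Pi}(\eta)$, output $U\cup\{x\}$. - $x:=*$: result unchanged, output $U\cup\{x\}$. - $?\chi$: result $?\sigma^{U\cup\Pi}(\chi)$,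 output $U$. - $\{x'=\eta\&\chi\}$: result $\{x'=\sigma^{U\cup\Pi}(\eta)\&\sigma^{U\cup\Pi}(\chi)\}$, output $U\cup\{x,x',\mu,\mu'\}$. - $ch(h)!\eta$: result $ch(h)!\sigma^{U\cup\Pi}(\eta)$, output $U\cup\{ch,h\}$. - $ch(h)?x$: result unchanged, output $U\cup\{ch,h,x\}$. - $\alpha\cup\beta$: result $\sigma^{U,\Pi}(\alpha)\cup\sigma^{U,\Pi}(\beta)$, output $V_1\cup V_2$ (the respective outputs). - $\alpha;\beta$: result $\sigma^{U,\Pi}(\alpha);\sigma^{V_1,\Pi}(\beta)$, where $V_1$ is the output of the first; the output is the output $V_2$ of the second. - $\alpha^*$: let $V$ be the output of $\sigma^{U,\Pi}(\alpha)$ (which must be defined); result $(\sigma^{V,\Pi}(\alpha))^*$, output $V$. - $\alpha\parallel\beta$: result $\sigma^{U,\Pi_\beta}(\alpha)\parallel\sigma^{U,\Pi_\alpha}(\beta)$ with outputs $V_1,V_2$; the output is $V_1\cup V_2$. Here $\Pi_\gamma=(\Pi\cup BV(\sigma^{U,\Pi}(\gamma)))\setminus(\{\mu,\mu'\}\cup\mathcal V_{\mathcal T})$. Adjoint interpretation. For an interpretation $I$ and a state $w$, the interpretation $\sigma^*_wI$ agrees with $I$ except: - $(\sigma^*_wI)(f)$ is the map $d\mapsto I[\cdot\mapsto d]\,w[\![\sigma f(\cdot)]\!]$; - $(\sigma^*_wI)(p)=\{d: I[\cdot\mapsto d],w\models\sigma p(\cdot)\}$; - $(\sigma^*_wI)(a^{\bar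 z}_{\bar{ch}})=[\![\sigma a]\!]^I$. Here $I[\cdot\mapsto d]$ interprets the nullary symbol $\cdot$ as $d$. Variation. For $U\subseteq\mathcal V\cup\Omega$, a state $v$ is a $U$-variation of a state $w$ iff $v\downarrow(U^\complement\cap\Omega)=w\downarrow(U^\complement\cap\Omega)$ on $U^\complement\cap\mathcal V$. *)

From Stdlib Require Import Reals List QArith Qreals Sorted ClassicalDescription.
From Coquelicot Require Import Coquelicot.
Import ListNotations.
Open Scope R_scope.

Definition chan := nat.

Inductive rvar : Type := RBase : nat -> rvar | RDiff : rvar -> rvar.

Definition rvar_eq_dec : forall x y : rvar, {x = y} + {x <> y}.
Proof. decide equality; apply Nat.eq_dec. Defined.

(* designated global time mu and its differential symbol mu' *)
Definition dmu : rvar := RBase 0.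
Definition dmu' : rvar := RDiff dmu.

Inductive var : Type := VarR (x : rvar) | VarN (n : nat) | VarT (h : nat).

Inductive sym : Type := SVar (z : var) | SChan (c : chan).
Definition symset := sym -> Prop.
Definition sunion (A B : symset) : symset := fun y => A y \/ B y.

(* finite (fc_co = false) or cofinite (fc_co = true) sets, as in the syntax *)
Record fcset (A : Type) := FC { fc_co : bool; fc_list : list A }.
Arguments FC {A}.
Arguments fc_co {A}.
Arguments fc_list {A}.
Definition fc_mem {A} (S : fcset A) (x : A) : Prop :=
  if fc_co S then ~ In x (fc_list S) else In x (fc_list S).

Definition fc_inter (S T : fcset chan) : fcset chan :=
  match fc_co S, fc_co T with
  | false, false => FC false (filter (fun c => existsb (Nat.eqb c) (fc_list T)) (fc_list S))
  | false, true => FC false (filter (fun c => negb (existsb (Nat.eqb c) (fc_list T))) (fc_list S))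
  | true, false => FC false (filter (fun c => negb (existsb (Nat.eqb c) (fc_list S))) (fc_list T))
  | true, true => FC true (fc_list S ++ fc_list T)
  end.

Inductive sort : Type := SR | SN | SC | ST.
Definition sort_eq_dec : forall a b : sort, {a = b} + {a <> b}.
Proof. decide equality. Defined.

Record event := Ev { ev_ch : chan; ev_val : R; ev_time : R }.
Definition trace := list event.

(* recorded events: tagged with a trace variable *)
Record revent := REv { re_tag : nat; re_ch : chan; re_val : R; re_time : R }.
Definition rtrace := list revent.

Definition sval (s : sort) : Type :=
  match s with SR => R | SN => nat | SC => chan | ST => trace end.

(* function symbols (one argument, cf. f(ch, e) in the substitution
   clauses); fs_prog: usable inside programs *)
Record fsym := FSym { fs_name : nat; fs_arg : sort; fs_res : sort; fs_prog : bool }.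
Record psym := PSym { ps_name : nat; ps_arg : sort; ps_prog : bool }.
Record pconst := PCst { pc_name : nat; pc_vars : fcset var; pc_chans : fcset chan }.

Inductive term : sort -> Type :=
| TRVar : rvar -> term SR
| TNVar : nat -> term SN
| TTVar : nat -> term ST
| TFun (f : fsym) : fcset chan -> term (fs_arg f) -> term (fs_res f)
| TDot (s : sort) : term s                      (* reserved nullary symbol . *)
| TRat : Q -> term SR
| TPlus : term SR -> term SR -> term SR
| TTimes : term SR -> term SR -> term SR
| TDiff : term SR -> term SR
| TVal : term ST -> term SR
| TTime : term ST -> term SR
| TNum : nat -> term SN
| TNPlus : term SN -> term SN -> term SN
| TLen : term ST -> term SN
| TChan : term ST -> term SC
| TEvent : chan -> term SR -> term SR -> term ST
| TCat : term ST -> term ST -> term ST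
| TProj : term ST -> fcset chan -> term ST
| TAt : term ST -> term SN -> term ST.

Inductive fml : Type :=
| FEq (s : sort) : term s -> term s -> fml
| FGeR : term SR -> term SR -> fml
| FGeN : term SN -> term SN -> fml
| FPref : term ST -> term ST -> fml
| FPred (p : psym) : fcset chan -> term (ps_arg p) -> fml
| FNot : fml -> fml
| FAnd : fml -> fml -> fml
| FForall : var -> fml -> fml
| FBox : prog -> fml -> fml
| FAC : prog -> fml -> fml -> fml -> fml
with prog : Type :=
| PConst : pconst -> prog
| PAssign : rvar -> term SR -> prog
| PRand : rvar -> prog
| PTest : fml -> prog
| PODE : rvar -> term SR -> fml -> prog
| PSeq : prog -> prog -> prog
| PChoice : prog -> prog -> prog
| PStar : prog -> prog
| PSend : chan -> nat -> term SR -> prog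
| PRecv : chan -> nat -> rvar -> prog
| PPar : prog -> prog -> prog.

Record state := St { sR : rvar -> R; sN : nat -> nat; sT : nat -> trace }.

Inductive vval : Type := VVR (r : R) | VVN (n : nat) | VVT (t : trace).
Definition sget (v : state) (z : var) : vval :=
  match z with VarR x => VVR (sR v x) | VarN n => VVN (sN v n) | VarT h => VVT (sT v h) end.

Definition agree (S : var -> Prop) (v w : state) : Prop :=
  forall z, S z -> sget v z = sget w z.

Definition updR (v : state) (x : rvar) (r : R) : state :=
  St (fun y => if rvar_eq_dec y x then r else sR v y) (sN v) (sT v).
Definition updN (v : state) (n : nat) (k : nat) : state :=
  St (sR v) (fun m => if Nat.eq_dec m n then k else sN v m) (sT v).
Definition updT (v : state) (h : nat) (t : trace) : state :=
  St (sR v) (sN v) (fun g => if Nat.eq_dec g h then t else sT v g).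

(* classical decision, used for projections onto arbitrary channel sets *)
Definition pdec (P : Prop) : bool :=
  if excluded_middle_informative P then true else false.

Definition tproj (C : chan -> Prop) (t : trace) : trace :=
  filter (fun e => pdec (C (ev_ch e))) t.
Definition rproj (C : chan -> Prop) (t : rtrace) : rtrace :=
  filter (fun e => pdec (C (re_ch e))) t.
Definition sproj (v : state) (C : chan -> Prop) : state :=
  St (sR v) (sN v) (fun h => tproj C (sT v h)).

Definition strip (e : revent) : event := Ev (re_ch e) (re_val e) (re_time e).
Definition sapp (v : state) (t : rtrace) : state :=
  St (sR v) (sN v)
     (fun h => sT v h ++ map strip (filter (fun e => Nat.eqb (re_tag e) h) t)).

Definition tprefix {A} (t1 t2 : list A) : Prop := exists t3, t2 = t1 ++ t3.
Definition sprefix {A} (t1 t2 : list A) : Prop := tprefix t1 t2 /\ t1 <> t2.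
Definition oprefix (t1 : rtrace) (o1 : option state) (t2 : rtrace) (o2 : option state) : Prop :=
  (o1 = None /\ tprefix t1 t2) \/ (t1 = t2 /\ o1 = o2).

Definition cmp := state -> rtrace -> option state -> Prop.

Record interp := Interp {
  I_f : forall f : fsym, sval (fs_arg f) -> sval (fs_res f);
  I_p : forall p : psym, sval (ps_arg p) -> Prop;
  I_a : pconst -> cmp;
  I_dot : forall s : sort, sval s }.

Fixpoint rvars_of {s} (e : term s) : list rvar :=
  match e with
  | TRVar x => [x]
  | TFun _ _ a => rvars_of a
  | TPlus a b | TTimes a b => rvars_of a ++ rvars_of b
  | TDiff a => rvars_of a
  | TVal a | TTime a | TLen a | TChan a => rvars_of a
  | TNPlus a b => rvars_of a ++ rvars_of b
  | TEvent _ a b => rvars_of a ++ rvars_of b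
  | TCat a b => rvars_of a ++ rvars_of b
  | TProj a _ => rvars_of a
  | TAt a b => rvars_of a ++ rvars_of b
  | _ => []
  end.

Fixpoint teval (I : interp) (v : state) {s} (e : term s) {struct e} : sval s :=
  match e in term s return sval s with
  | TRVar x => sR v x
  | TNVar n => sN v n
  | TTVar h => sT v h
  | TFun f chs a => I_f I f (teval I (sproj v (fc_mem chs)) a)
  | TDot s => I_dot I s
  | TRat q => Q2R q
  | TPlus a b => teval I v a + teval I v b
  | TTimes a b => teval I v a * teval I v b
  | TDiff a =>
      fold_right
        (fun x acc => sR v (RDiff x) * Derive (fun r => teval I (updR v x r) a) (sR v x) + acc)
        0 (nodup rvar_eq_dec (rvars_of a))
  | TVal a => match teval I v a with ev :: _ => ev_val ev | [] => 0 end
  | TTime a => match teval I v a with ev :: _ => ev_time ev | [] => 0 end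
  | TNum n => n
  | TNPlus a b => (teval I v a + teval I v b)%nat
  | TLen a => length (teval I v a)
  | TChan a => match teval I v a with ev :: _ => ev_ch ev | [] => 0%nat end
  | TEvent c a b => [Ev c (teval I v a) (teval I v b)]
  | TCat a b => teval I v a ++ teval I v b
  | TProj a C => tproj (fc_mem C) (teval I v a)
  | TAt a i => match nth_error (teval I v a) (teval I v i) with
               | Some ev => [ev] | None => [] end
  end.

Definition smoothR (g : R -> R) : Prop := forall (n : nat) (x : R), ex_derive_n g n x.

Definition chrono (v : state) (t : rtrace) (o : option state) : Prop :=
  Sorted Rle (map re_time t) /\ List.Forall (fun e => sR v dmu <= re_time e) t /\
  (forall w, o = Some w -> sR v dmu <= sR w dmu /\ List.Forall (fun e => re_time e <= sR w dmu) t).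

(* variables a program constant may bind: zbar, which is a subset of V_R u V_T *)
Definition pc_binds (a : pconst) (z : var) : Prop :=
  fc_mem (pc_vars a) z /\ forall n, z <> VarN n.

Definition interp_ok (I : interp) : Prop :=
  (forall f : fsym,
      match fs_arg f as s1, fs_res f as s2 return (sval s1 -> sval s2) -> Prop with
      | SR, SR => fun g => smoothR g
      | _, _ => fun _ => True
      end (I_f I f)) /\
  (forall a : pconst,
      (forall v, I_a I a v [] None) /\
      (forall v t o t' o', I_a I a v t o -> oprefix t' o' t o -> I_a I a v t' o') /\
      (forall v t o, I_a I a v t o ->
         chrono v t o /\
         rproj (fun c => ~ fc_mem (pc_chans a) c) t = [] /\
         (forall w, o = Some w ->
            agree (fun z => exists h, z = VarT h) v w /\
            agree (fun z => ~ pc_binds a z) (sapp w t) v))).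

Definition BVs (S : interp -> cmp) : var -> Prop :=
  fun z => exists I v t w, interp_ok I /\ S I v t (Some w) /\ sget (sapp w t) z <> sget v z.

Definition CNs (S : interp -> cmp) : chan -> Prop :=
  fun c => exists I v t o, interp_ok I /\ S I v t o /\ rproj (fun c' => c' = c) t <> [].

Definition comm_of (S : interp -> cmp) (e : revent) : Prop :=
  CNs S (re_ch e) /\ BVs S (VarT (re_tag e)).

Definition smerge (B : var -> Prop) (o1 o2 : option state) : option state :=
  match o1, o2 with
  | Some w1, Some w2 =>
      Some (St (fun x => if pdec (B (VarR x)) then sR w1 x else sR w2 x)
               (fun n => if pdec (B (VarN n)) then sN w1 n else sN w2 n)
               (fun h => if pdec (B (VarT h)) then sT w1 h else sT w2 h))
  | _, _ => None
  end.

Definition par_sem (S1 S2 : interp -> cmp) (I : interp) : cmp :=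
  fun v t o => exists o1 o2,
    S1 I v (filter (fun e => pdec (comm_of S1 e)) t) o1 /\
    S2 I v (filter (fun e => pdec (comm_of S2 e)) t) o2 /\
    (forall w1 w2, o1 = Some w1 -> o2 = Some w2 -> sR w1 dmu = sR w2 dmu) /\
    List.Forall (fun e => comm_of S1 e \/ comm_of S2 e) t /\
    o = smerge (BVs S1) o1 o2.

Definition seq_sem (S1 S2 : cmp) : cmp :=
  fun v t o =>
    (o = None /\ exists w, S1 v t w) \/
    (exists t1 t2 u, t = t1 ++ t2 /\ S1 v t1 (Some u) /\ S2 u t2 o).

Definition test_true : cmp := fun v t o => t = [] /\ (o = None \/ o = Some v).

Fixpoint iter_sem (n : nat) (S : cmp) : cmp :=
  match n with O => test_true | S n' => seq_sem S (iter_sem n' S) end.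

Definition ode_sol (I : interp) (x : rvar) (eta : term SR) (chi : state -> Prop)
    (v w : state) : Prop :=
  exists (s : R) (phi : R -> state),
    0 <= s /\ phi s = w /\
    agree (fun z => z <> VarR (RDiff x) /\ z <> VarR dmu') (phi 0) v /\
    (forall t, 0 <= t <= s ->
       agree (fun z => z <> VarR x /\ z <> VarR (RDiff x) /\ z <> VarR dmu /\ z <> VarR dmu')
             (phi t) v /\
       chi (phi t) /\
       sR (phi t) (RDiff x) = teval I (phi t) eta /\
       sR (phi t) dmu' = 1 /\
       filterdiff (fun r : R => sR (phi r) x) (within (fun r => 0 <= r <= s) (locally t))
                  (fun h : R => scal h (sR (phi t) (RDiff x))) /\
       filterdiff (fun r : R => sR (phi r) dmu) (within (fun r => 0 <= r <= s) (locally t))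
                  (fun h : R => scal h (sR (phi t) dmu'))).

Fixpoint fsem (phi : fml) (I : interp) (v : state) {struct phi} : Prop :=
  match phi with
  | FEq _ a b => teval I v a = teval I v b
  | FGeR a b => teval I v a >= teval I v b
  | FGeN a b => (teval I v b <= teval I v a)%nat
  | FPref a b => tprefix (teval I v a) (teval I v b)
  | FPred p chs a => I_p I p (teval I (sproj v (fc_mem chs)) a)
  | FNot q => ~ fsem q I v
  | FAnd a b => fsem a I v /\ fsem b I v
  | FForall z q =>
      match z with
      | VarR x => forall r : R, fsem q I (updR v x r)
      | VarN n => forall k : nat, fsem q I (updN v n k)
      | VarT h => forall t : trace, fsem q I (updT v h t)
      end
  | FBox a q => forall t w, psem a I v t (Some w) -> fsem q I (sapp w t)
  | FAC a A C q => forall t o, psem a I v t o ->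
      ((forall s, sprefix s t -> fsem A I (sapp v s)) -> fsem C I (sapp v t)) /\
      ((forall s, tprefix s t -> fsem A I (sapp v s)) ->
         forall w, o = Some w -> fsem q I (sapp w t))
  end
with psem (a : prog) {struct a} : interp -> cmp :=
  match a with
  | PConst c => fun I => I_a I c
  | PAssign x eta => fun I v t o =>
      t = [] /\ (o = None \/ o = Some (updR v x (teval I v eta)))
  | PRand x => fun I v t o =>
      t = [] /\ (o = None \/ exists r, o = Some (updR v x r))
  | PTest chi => fun I v t o =>
      t = [] /\ (o = None \/ (o = Some v /\ fsem chi I v))
  | PODE x eta chi => fun I v t o =>
      t = [] /\ (o = None \/ exists w, o = Some w /\ ode_sol I x eta (fun u => fsem chi I u) v w)
  | PSeq a1 a2 => fun I => seq_sem (psem a1 I) (psem a2 I)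
  | PChoice a1 a2 => fun I v t o => psem a1 I v t o \/ psem a2 I v t o
  | PStar a1 => fun I v t o => exists n, iter_sem n (psem a1 I) v t o
  | PSend c h eta => fun I v t o =>
      oprefix t o [REv h c (teval I v eta) (sR v dmu)] (Some v)
  | PRecv c h x => fun I v t o =>
      exists d, oprefix t o [REv h c d (sR v dmu)] (Some (updR v x d))
  | PPar a1 a2 => fun I => par_sem (psem a1) (psem a2) I
  end.

Definition BVp (a : prog) : var -> Prop := BVs (psem a).
Definition CNp (a : prog) : chan -> Prop := CNs (psem a).

Definition FVt {s} (e : term s) : var -> Prop :=
  fun z => exists I v v', interp_ok I /\ agree (fun y => y <> z) v v' /\
                          teval I v e <> teval I v' e.
Definition CNt {s} (e : term s) : chan -> Prop :=
  fun c => exists I v v', interp_ok I /\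
    agree (fun _ => True) (sproj v (fun c' => c' <> c)) (sproj v' (fun c' => c' <> c)) /\
    teval I v e <> teval I v' e.
Definition FVf (q : fml) : var -> Prop :=
  fun z => exists I v v', interp_ok I /\ agree (fun y => y <> z) v v' /\
                          ~ (fsem q I v <-> fsem q I v').
Definition CNf (q : fml) : chan -> Prop :=
  fun c => exists I v v', interp_ok I /\
    agree (fun _ => True) (sproj v (fun c' => c' <> c)) (sproj v' (fun c' => c' <> c)) /\
    ~ (fsem q I v <-> fsem q I v').

Definition symFVCNt {s} (e : term s) : symset :=
  fun y => match y with SVar z => FVt e z | SChan c => CNt e c end.
Definition symFVCNf (q : fml) : symset :=
  fun y => match y with SVar z => FVf q z | SChan c => CNf q c end.
Definition symBVCNp (a : prog) : symset :=
  fun y => match y with SVar z => BVp a z | SChan c => CNp a c end.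
Definition symBVp (a : prog) : symset :=
  fun y => match y with SVar z => BVp a z | SChan _ => False end.

Fixpoint tpush (C : fcset chan) {s} (e : term s) {struct e} : term s :=
  match e in term s return term s with
  | TRVar x => TRVar x
  | TNVar n => TNVar n
  | TTVar h => TProj (TTVar h) C
  | TFun f chs a => TFun f (fc_inter chs C) a
  | TDot s => TDot s
  | TRat q => TRat q
  | TPlus a b => TPlus (tpush C a) (tpush C b)
  | TTimes a b => TTimes (tpush C a) (tpush C b)
  | TDiff a => TDiff (tpush C a)
  | TVal a => TVal (tpush C a)
  | TTime a => TTime (tpush C a)
  | TNum n => TNum n
  | TNPlus a b => TNPlus (tpush C a) (tpush C b)
  | TLen a => TLen (tpush C a)
  | TChan a => TChan (tpush C a)
  | TEvent c a b => TEvent c (tpush C a) (tpush C b)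
  | TCat a b => TCat (tpush C a) (tpush C b)
  | TProj a D => TProj (tpush C a) D
  | TAt a i => TAt (tpush C a) (tpush C i)
  end.

Fixpoint trepl {s0} (d : term s0) {s} (e : term s) {struct e} : term s :=
  match e in term s return term s with
  | TRVar x => TRVar x
  | TNVar n => TNVar n
  | TTVar h => TTVar h
  | TFun f chs a => TFun f chs (trepl d a)
  | TDot s' => match sort_eq_dec s0 s' with
               | left H => eq_rect s0 term d s' H
               | right _ => TDot s'
               end
  | TRat q => TRat q
  | TPlus a b => TPlus (trepl d a) (trepl d b)
  | TTimes a b => TTimes (trepl d a) (trepl d b)
  | TDiff a => TDiff (trepl d a)
  | TVal a => TVal (trepl d a)
  | TTime a => TTime (trepl d a)
  | TNum n => TNum n
  | TNPlus a b => TNPlus (trepl d a) (trepl d b)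
  | TLen a => TLen (trepl d a)
  | TChan a => TChan (trepl d a)
  | TEvent c a b => TEvent c (trepl d a) (trepl d b)
  | TCat a b => TCat (trepl d a) (trepl d b)
  | TProj a D => TProj (trepl d a) D
  | TAt a i => TAt (trepl d a) (trepl d i)
  end.

Fixpoint frepl {s0} (d : term s0) (q : fml) {struct q} : fml :=
  match q with
  | FEq _ a b => FEq _ (trepl d a) (trepl d b)
  | FGeR a b => FGeR (trepl d a) (trepl d b)
  | FGeN a b => FGeN (trepl d a) (trepl d b)
  | FPref a b => FPref (trepl d a) (trepl d b)
  | FPred p chs a => FPred p chs (trepl d a)
  | FNot q1 => FNot (frepl d q1)
  | FAnd q1 q2 => FAnd (frepl d q1) (frepl d q2)
  | FForall z q1 => FForall z (frepl d q1)
  | FBox a q1 => FBox (prepl d a) (frepl d q1)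
  | FAC a A C q1 => FAC (prepl d a) (frepl d A) (frepl d C) (frepl d q1)
  end
with prepl {s0} (d : term s0) (a : prog) {struct a} : prog :=
  match a with
  | PConst c => PConst c
  | PAssign x eta => PAssign x (trepl d eta)
  | PRand x => PRand x
  | PTest chi => PTest (frepl d chi)
  | PODE x eta chi => PODE x (trepl d eta) (frepl d chi)
  | PSeq a1 a2 => PSeq (prepl d a1) (prepl d a2)
  | PChoice a1 a2 => PChoice (prepl d a1) (prepl d a2)
  | PStar a1 => PStar (prepl d a1)
  | PSend c h eta => PSend c h (trepl d eta)
  | PRecv c h x => PRecv c h x
  | PPar a1 a2 => PPar (prepl d a1) (prepl d a2)
  end.

Record usubst := US {
  us_f : forall f : fsym, option (term (fs_res f)); (* sigma f(.), . = TDot (fs_arg f) *)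
  us_p : psym -> option fml;                           (* sigma p(.), . = TDot (ps_arg p) *)
  us_a : pconst -> option prog }.

Definition sig_a (sg : usubst) (a : pconst) : prog :=
  match us_a sg a with Some b => b | None => PConst a end.

Definition pi_ctx (Pi : symset) (g : prog) : symset :=
  fun y => (Pi y \/ symBVp g y) /\ y <> SVar (VarR dmu) /\ y <> SVar (VarR dmu') /\
           forall h, y <> SVar (VarT h).

(* usT sg U s e e' : sigma^U(e) is defined and equals e' *)
Inductive usT (sg : usubst) : symset -> forall s, term s -> term s -> Prop :=
| usT_RVar U x : usT sg U SR (TRVar x) (TRVar x)
| usT_NVar U n : usT sg U SN (TNVar n) (TNVar n)
| usT_TVar U h : usT sg U ST (TTVar h) (TTVar h)
| usT_FunNone U f chs a a' :
    us_f sg f = None -> usT sg U (fs_arg f) a a' ->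
    usT sg U (fs_res f) (TFun f chs a) (TFun f chs a')
| usT_FunSome U f chs a a' t :
    us_f sg f = Some t -> usT sg U (fs_arg f) (tpush chs a) a' ->
    (forall y, symFVCNt t y -> ~ U y) ->
    usT sg U (fs_res f) (TFun f chs a) (trepl a' t)
| usT_Dot U s : usT sg U s (TDot s) (TDot s)
| usT_Rat U q : usT sg U SR (TRat q) (TRat q)
| usT_Plus U a b a' b' : usT sg U SR a a' -> usT sg U SR b b' ->
    usT sg U SR (TPlus a b) (TPlus a' b')
| usT_Times U a b a' b' : usT sg U SR a a' -> usT sg U SR b b' ->
    usT sg U SR (TTimes a b) (TTimes a' b')
| usT_Diff U a a' : usT sg (fun _ => True) SR a a' -> usT sg U SR (TDiff a) (TDiff a')
| usT_Val U a a' : usT sg U ST a a' -> usT sg U SR (TVal a) (TVal a')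
| usT_Time U a a' : usT sg U ST a a' -> usT sg U SR (TTime a) (TTime a')
| usT_Num U n : usT sg U SN (TNum n) (TNum n)
| usT_NPlus U a b a' b' : usT sg U SN a a' -> usT sg U SN b b' ->
    usT sg U SN (TNPlus a b) (TNPlus a' b')
| usT_Len U a a' : usT sg U ST a a' -> usT sg U SN (TLen a) (TLen a')
| usT_Chan U a a' : usT sg U ST a a' -> usT sg U SC (TChan a) (TChan a')
| usT_Event U c a b a' b' : usT sg U SR a a' -> usT sg U SR b b' ->
    usT sg U ST (TEvent c a b) (TEvent c a' b')
| usT_Cat U a b a' b' : usT sg U ST a a' -> usT sg U ST b b' ->
    usT sg U ST (TCat a b) (TCat a' b')
| usT_Proj U a a' C : usT sg U ST a a' -> usT sg U ST (TProj a C) (TProj a' C)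
| usT_At U a i a' i' : usT sg U ST a a' -> usT sg U SN i i' ->
    usT sg U ST (TAt a i) (TAt a' i').

(* usF sg U phi phi' : sigma^U(phi) is defined and equals phi';
   usP sg U Pi a a' V : sigma^{U,Pi}(a) is defined, equals a', with output taboo V *)
Inductive usF (sg : usubst) : symset -> fml -> fml -> Prop :=
| usF_Eq U s a b a' b' : usT sg U s a a' -> usT sg U s b b' ->
    usF sg U (FEq s a b) (FEq s a' b')
| usF_GeR U a b a' b' : usT sg U SR a a' -> usT sg U SR b b' ->
    usF sg U (FGeR a b) (FGeR a' b')
| usF_GeN U a b a' b' : usT sg U SN a a' -> usT sg U SN b b' ->
    usF sg U (FGeN a b) (FGeN a' b')
| usF_Pref U a b a' b' : usT sg U ST a a' -> usT sg U ST b b' ->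
    usF sg U (FPref a b) (FPref a' b')
| usF_PredNone U p chs a a' :
    us_p sg p = None -> usT sg U (ps_arg p) a a' ->
    usF sg U (FPred p chs a) (FPred p chs a')
| usF_PredSome U p chs a a' q :
    us_p sg p = Some q -> usT sg U (ps_arg p) (tpush chs a) a' ->
    (forall y, symFVCNf q y -> ~ U y) ->
    usF sg U (FPred p chs a) (frepl a' q)
| usF_Not U q q' : usF sg U q q' -> usF sg U (FNot q) (FNot q')
| usF_And U q1 q2 q1' q2' : usF sg U q1 q1' -> usF sg U q2 q2' ->
    usF sg U (FAnd q1 q2) (FAnd q1' q2')
| usF_Forall U z q q' : usF sg (sunion U (fun y => y = SVar z)) q q' ->
    usF sg U (FForall z q) (FForall z q')
| usF_Box U a a' V q q' : usP sg U (fun _ => False) a a' V -> usF sg V q q' ->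
    usF sg U (FBox a q) (FBox a' q')
| usF_AC U a a' V A A' C C' q q' : usP sg U (fun _ => False) a a' V ->
    usF sg V A A' -> usF sg V C C' -> usF sg V q q' ->
    usF sg U (FAC a A C q) (FAC a' A' C' q')
with usP (sg : usubst) : symset -> symset -> prog -> prog -> symset -> Prop :=
| usP_Const U Pi c :
    (forall z, BVp (sig_a sg c) z -> fc_mem (pc_vars c) z) ->
    (forall ch, CNp (sig_a sg c) ch -> fc_mem (pc_chans c) ch) ->
    usP sg U Pi (PConst c) (sig_a sg c) (sunion U (symBVCNp (sig_a sg c)))
| usP_Assign U Pi x eta eta' : usT sg (sunion U Pi) SR eta eta' ->
    usP sg U Pi (PAssign x eta) (PAssign x eta') (sunion U (fun y => y = SVar (VarR x)))
| usP_Rand U Pi x :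
    usP sg U Pi (PRand x) (PRand x) (sunion U (fun y => y = SVar (VarR x)))
| usP_Test U Pi chi chi' : usF sg (sunion U Pi) chi chi' ->
    usP sg U Pi (PTest chi) (PTest chi') U
| usP_ODE U Pi x eta eta' chi chi' :
    usT sg (sunion U Pi) SR eta eta' -> usF sg (sunion U Pi) chi chi' ->
    usP sg U Pi (PODE x eta chi) (PODE x eta' chi')
        (sunion U (fun y => y = SVar (VarR x) \/ y = SVar (VarR (RDiff x)) \/
                            y = SVar (VarR dmu) \/ y = SVar (VarR dmu')))
| usP_Send U Pi c h eta eta' : usT sg (sunion U Pi) SR eta eta' ->
    usP sg U Pi (PSend c h eta) (PSend c h eta')
        (sunion U (fun y => y = SChan c \/ y = SVar (VarT h)))
| usP_Recv U Pi c h x :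
    usP sg U Pi (PRecv c h x) (PRecv c h x)
        (sunion U (fun y => y = SChan c \/ y = SVar (VarT h) \/ y = SVar (VarR x)))
| usP_Choice U Pi a b a' b' V1 V2 :
    usP sg U Pi a a' V1 -> usP sg U Pi b b' V2 ->
    usP sg U Pi (PChoice a b) (PChoice a' b') (sunion V1 V2)
| usP_Seq U Pi a b a' b' V1 V2 :
    usP sg U Pi a a' V1 -> usP sg V1 Pi b b' V2 ->
    usP sg U Pi (PSeq a b) (PSeq a' b') V2
| usP_Star U Pi a a1 V a2 V2 :
    usP sg U Pi a a1 V -> usP sg V Pi a a2 V2 ->
    usP sg U Pi (PStar a) (PStar a2) V
| usP_Par U Pi a b ar Var br Vbr a' b' V1 V2 :
    usP sg U Pi a ar Var -> usP sg U Pi b br Vbr ->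
    usP sg U (pi_ctx Pi br) a a' V1 -> usP sg U (pi_ctx Pi ar) b b' V2 ->
    usP sg U Pi (PPar a b) (PPar a' b') (sunion V1 V2).

Definition set_dot (I : interp) (s : sort) (d : sval s) : interp :=
  Interp (I_f I) (I_p I) (I_a I)
    (fun s' => match sort_eq_dec s s' with
               | left H => eq_rect s sval d s' H
               | right _ => I_dot I s'
               end).

Definition adjoint (sg : usubst) (w : state) (I : interp) : interp :=
  Interp
    (fun f => match us_f sg f with
              | Some t => fun d => teval (set_dot I (fs_arg f) d) w t
              | None => I_f I f
              end)
    (fun p => match us_p sg p with
              | Some q => fun d => fsem q (set_dot I (ps_arg p) d) w
              | None => I_p I p
              end)
    (fun c => match us_a sg c with
              | Some b => psem b I
              | None => I_a I c
              end)
    (I_dot I).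

Definition variation (U : symset) (v w : state) : Prop :=
  agree (fun z => ~ U (SVar z))
        (sproj v (fun c => ~ U (SChan c))) (sproj w (fun c => ~ U (SChan c))).

(* polynomials with rational coefficients in real variables and program
   function symbols; dotok: the reserved symbol . may occur *)
Fixpoint is_poly (dotok : bool) {s} (e : term s) : Prop :=
  match e with
  | TRVar _ => True
  | TRat _ => True
  | TDot s' => dotok = true /\ s' = SR
  | TPlus a b | TTimes a b => is_poly dotok a /\ is_poly dotok b
  | TFun f _ a => fs_prog f = true /\ fs_arg f = SR /\ fs_res f = SR /\ is_poly dotok a
  | _ => False
  end.

Fixpoint is_folra (dotok : bool) (q : fml) : Prop :=
  match q with
  | FEq s a b => s = SR /\ is_poly dotok a /\ is_poly dotok b
  | FGeR a b => is_poly dotok a /\ is_poly dotok b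
  | FPred p _ a => ps_prog p = true /\ ps_arg p = SR /\ is_poly dotok a
  | FNot q1 => is_folra dotok q1
  | FAnd q1 q2 => is_folra dotok q1 /\ is_folra dotok q2
  | FForall z q1 => (exists x, z = VarR x) /\ is_folra dotok q1
  | _ => False
  end.

Fixpoint wf_term (dotok : bool) {s} (e : term s) : Prop :=
  match e with
  | TDot _ => dotok = true
  | TFun _ _ a => wf_term dotok a
  | TPlus a b | TTimes a b => wf_term dotok a /\ wf_term dotok b
  | TDiff a => is_poly dotok a
  | TVal a | TTime a | TLen a | TChan a => wf_term dotok a
  | TNPlus a b => wf_term dotok a /\ wf_term dotok b
  | TEvent _ a b => is_poly dotok a /\ is_poly dotok b
  | TCat a b => wf_term dotok a /\ wf_term dotok b
  | TProj a _ => wf_term dotok a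
  | TAt a i => wf_term dotok a /\ wf_term dotok i
  | _ => True
  end.

Fixpoint wf_prog (dotok : bool) (a : prog) : Prop :=
  match a with
  | PConst _ => True
  | PAssign _ eta => is_poly dotok eta
  | PRand _ => True
  | PTest chi => is_folra dotok chi
  | PODE _ eta chi => is_poly dotok eta /\ is_folra dotok chi
  | PSeq a1 a2 | PChoice a1 a2 => wf_prog dotok a1 /\ wf_prog dotok a2
  | PStar a1 => wf_prog dotok a1
  | PSend _ _ eta => is_poly dotok eta
  | PRecv _ _ _ => True
  | PPar a1 a2 => wf_prog dotok a1 /\ wf_prog dotok a2 /\
      (forall z, BVp a1 z -> BVp a2 z ->
         z = VarR dmu \/ z = VarR dmu' \/ exists h, z = VarT h)
  end.

Fixpoint wf_fml (dotok : bool) (q : fml) : Prop :=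
  match q with
  | FEq _ a b | FGeR a b | FGeN a b | FPref a b => wf_term dotok a /\ wf_term dotok b
  | FPred _ _ a => wf_term dotok a
  | FNot q1 => wf_fml dotok q1
  | FAnd q1 q2 => wf_fml dotok q1 /\ wf_fml dotok q2
  | FForall _ q1 => wf_fml dotok q1
  | FBox a q1 => wf_prog dotok a /\ wf_fml dotok q1
  | FAC a A C q1 => wf_prog dotok a /\ wf_fml dotok A /\ wf_fml dotok C /\ wf_fml dotok q1 /\
      (forall z, (FVf A z \/ FVf C z) -> BVp a z -> exists h, z = VarT h)
  end.

Definition us_ok (sg : usubst) : Prop :=
  (forall f t, us_f sg f = Some t -> wf_term true t /\ (fs_prog f = true -> is_poly true t)) /\
  (forall p q, us_p sg p = Some q -> wf_fml true q /\ (ps_prog p = true -> is_folra true q)) /\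
  (forall c b, us_a sg c = Some b -> wf_prog false b).

(* A substituted program can only modify what the substitution declared in its output
   taboo: by induction on the derivation of sigma^{U,Pi}(alpha), every finished run of
   alpha under the adjoint interpretation keeps real and integer variables outside V,
   records no events on trace variables outside V, and leaves all trace variables
   untouched (program constants run sigma a under I, whose bound variables are part of
   V).  Since U is contained in V, agreement of v with w off U then transfers to
   agreement of o . tau with w off V. *)
From Stdlib Require Import Reals Lra List Classical ClassicalDescription.
Import ListNotations.

Lemma pdec_true_iff (P : Prop) : pdec P = true <-> P.
Proof.
  unfold pdec; destruct (excluded_middle_informative P); split; auto; discriminate.
Qed.

Lemma filter_nil_iff {A} (f : A -> bool) (l : list A) :
  filter f l = [] <-> forall e, In e l -> f e = false.
Proof.
  rewrite <- (filter_false l).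
  exact (filter_ext_in_iff f (fun _ => false) l).
Qed.

Lemma filter_nil_of_cover {A} (f p q : A -> bool) (l : list A) :
  (forall e, In e l -> p e = true \/ q e = true) ->
  filter f (filter p l) = [] -> filter f (filter q l) = [] -> filter f l = [].
Proof.
  rewrite !filter_nil_iff; intros Hcov Hp Hq e He.
  destruct (Hcov e He) as [Pe|Qe]; [apply Hp|apply Hq]; apply filter_In; auto.
Qed.

Lemma tproj_tproj_sub (C D : chan -> Prop) (l : trace) :
  (forall c, C c -> D c) -> tproj C (tproj D l) = tproj C l.
Proof.
  intros CD; unfold tproj; induction l as [|e l IH]; simpl; auto.
  destruct (pdec (D (ev_ch e))) eqn:De; simpl.
  - destruct (pdec (C (ev_ch e))); rewrite IH; auto.
  - destruct (pdec (C (ev_ch e))) eqn:Ce; auto.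
    apply pdec_true_iff, CD, pdec_true_iff in Ce; congruence.
Qed.

Lemma usP_taboo_incl sg U Pi a a' V :
  usP sg U Pi a a' V -> forall y, U y -> V y.
Proof. induction 1; intros y Hy; unfold sunion in *; auto. Qed.

Lemma ode_sol_agree I x eta chi v o :
  ode_sol I x eta chi v o ->
  agree (fun z => z <> VarR x /\ z <> VarR (RDiff x) /\ z <> VarR dmu /\ z <> VarR dmu') o v.
Proof.
  intros (s & phi & s_ge0 & <- & _ & Hall).
  apply (Hall s); lra.
Qed.

Definition keeps_tvars (S : cmp) : Prop :=
  forall v t o, S v t (Some o) -> forall h, sT o h = sT v h.

Lemma psem_keeps_tvars (K : interp) :
  (forall c, keeps_tvars (I_a K c)) -> forall a, keeps_tvars (psem a K).
Proof.
  intros HK a; induction a as [c|x e|x|chi|x e chi|a1 IH1 a2 IH2|a1 IH1 a2 IH2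
                               |a1 IH|c g e|c g x|a1 IH1 a2 IH2];
    intros v t o Hp h; simpl in Hp.
  - exact (HK c v t o Hp h).
  - destruct Hp as [_ [E|E]]; inversion E; reflexivity.
  - destruct Hp as [_ [E|[r E]]]; inversion E; reflexivity.
  - destruct Hp as [_ [E|[E _]]]; inversion E; reflexivity.
  - destruct Hp as [_ [E|[o' [E Hsol]]]]; inversion E; subst.
    assert (Eh := ode_sol_agree _ _ _ _ _ _ Hsol (VarT h)).
    injection Eh; auto; repeat split; discriminate.
  - destruct Hp as [[E _]|(t1 & t2 & u & _ & H1 & H2)]; [discriminate|].
    rewrite (IH2 _ _ _ H2), (IH1 _ _ _ H1); auto.
  - destruct Hp as [Hp|Hp]; eauto.
  - destruct Hp as [n Hp]; revert v t o Hp; induction n as [|n IHn];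
      intros v t o Hp; simpl in Hp.
    + destruct Hp as [_ [E|E]]; inversion E; reflexivity.
    + destruct Hp as [[E _]|(t1 & t2 & u & _ & H1 & H2)]; [discriminate|].
      rewrite (IHn _ _ _ H2), (IH _ _ _ H1); auto.
  - destruct Hp as [[E _]|[_ E]]; inversion E; reflexivity.
  - destruct Hp as [d [[E _]|[_ E]]]; inversion E; reflexivity.
  - destruct Hp as (o1 & o2 & H1 & H2 & _ & _ & Ho).
    destruct o1 as [w1|], o2 as [w2|]; simpl in Ho; try discriminate.
    injection Ho as Ho; subst o; simpl; destruct (pdec _); eauto.
Qed.

Lemma interp_ok_keeps_tvars I : interp_ok I -> forall c, keeps_tvars (I_a I c).
Proof.
  intros [_ HA] c v t o Hp h.
  destruct (HA c) as (_ & _ & Hrun).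
  destruct (Hrun v t (Some o) Hp) as (_ & _ & Ho).
  destruct (Ho o eq_refl) as [Hagree _].
  injection (Hagree (VarT h) (ex_intro _ h eq_refl)); auto.
Qed.

Lemma adjoint_keeps_tvars sg w I :
  interp_ok I -> forall a, keeps_tvars (psem a (adjoint sg w I)).
Proof.
  intros HI; apply psem_keeps_tvars; intros c; simpl.
  destruct (us_a sg c) as [b|].
  - exact (psem_keeps_tvars I (interp_ok_keeps_tvars I HI) b).
  - exact (interp_ok_keeps_tvars I HI c).
Qed.

Record confined (V : symset) (v : state) (t : rtrace) (o : state) : Prop := {
  confined_R : forall x, ~ V (SVar (VarR x)) -> sR o x = sR v x;
  confined_N : forall n, ~ V (SVar (VarN n)) -> sN o n = sN v n;
  confined_tags : forall h, ~ V (SVar (VarT h)) -> filter (fun e => Nat.eqb (re_tag e) h) t = [] }.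

Lemma confined_weaken V V' v t o :
  (forall y, V y -> V' y) -> confined V v t o -> confined V' v t o.
Proof. intros VV' [HR HN HT]; split; auto. Qed.

Lemma confined_seq V1 V2 v t1 u t2 o :
  (forall y, V1 y -> V2 y) -> confined V1 v t1 u -> confined V2 u t2 o ->
  confined V2 v (t1 ++ t2) o.
Proof.
  intros V12 [R1 N1 T1] [R2 N2 T2]; split.
  - intros x Hx; rewrite R2, R1; auto.
  - intros n Hn; rewrite N2, N1; auto.
  - intros h Hh; rewrite filter_app, T1, T2; auto.
Qed.

Lemma confined_update_one V v t x r :
  V (SVar (VarR x)) -> (forall h, ~ V (SVar (VarT h)) ->
    filter (fun e => Nat.eqb (re_tag e) h) t = []) ->
  confined V v t (updR v x r).
Proof.
  intros Vx HT; split; simpl; auto.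
  intros y Hy; destruct (rvar_eq_dec y x) as [->|]; tauto.
Qed.

Lemma psem_confined_BV I b v t o :
  interp_ok I -> psem b I v t (Some o) -> confined (symBVCNp b) v t o.
Proof.
  intros HI Hp.
  assert (Hfree : forall z, ~ BVp b z -> sget (sapp o t) z = sget v z).
  { intros z Hz; apply NNPP; intros Hne; apply Hz; exists I, v, t, o; auto. }
  split.
  - intros x Hx; injection (Hfree (VarR x) Hx); auto.
  - intros n Hn; injection (Hfree (VarN n) Hn); auto.
  - intros h Hh; injection (Hfree (VarT h) Hh); simpl.
    rewrite (psem_keeps_tvars I (interp_ok_keeps_tvars I HI) b v t o Hp h).
    rewrite <- (app_nil_r (sT v h)) at 2.
    intros E; apply app_inv_head, map_eq_nil in E; exact E.
Qed.

(* The merged state takes each variable from one side, both of which agree with v off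
   V1 u V2; every event belongs to one side, whose own tagged events are excluded. *)
Lemma confined_par (S1 S2 : interp -> cmp) I V1 V2 v t o :
  (forall t1 o1, S1 I v t1 (Some o1) -> confined V1 v t1 o1) ->
  (forall t2 o2, S2 I v t2 (Some o2) -> confined V2 v t2 o2) ->
  par_sem S1 S2 I v t (Some o) -> confined (sunion V1 V2) v t o.
Proof.
  intros Conf1 Conf2 (o1 & o2 & H1 & H2 & _ & Hcomm & Ho).
  destruct o1 as [w1|], o2 as [w2|]; simpl in Ho; try discriminate.
  injection Ho as Ho; subst o.
  destruct (Conf1 _ _ H1) as [R1 N1 T1], (Conf2 _ _ H2) as [R2 N2 T2].
  unfold sunion; split; simpl.
  - intros x Hx; destruct (pdec _); [apply R1|apply R2]; tauto.
  - intros n Hn; destruct (pdec _); [apply N1|apply N2]; tauto.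
  - intros h Hh; apply (filter_nil_of_cover _ (fun e => pdec (comm_of S1 e))
                                             (fun e => pdec (comm_of S2 e))).
    + rewrite Forall_forall in Hcomm; intros e He.
      rewrite !pdec_true_iff; auto.
    + apply T1; tauto.
    + apply T2; tauto.
Qed.

Lemma usP_confined sg I w U Pi a a' V :
  interp_ok I -> usP sg U Pi a a' V ->
  forall v t o, psem a (adjoint sg w I) v t (Some o) -> confined V v t o.
Proof.
  intros HI Hus; induction Hus; intros v t o Hp; simpl in Hp;
    unfold sunion.
  - assert (Hb : psem (sig_a sg c) I v t (Some o))
      by (unfold sig_a; destruct (us_a sg c); auto).
    apply (confined_weaken (symBVCNp (sig_a sg c))); auto.
    exact (psem_confined_BV I _ v t o HI Hb).
  - destruct Hp as [-> [E|E]]; inversion E; subst.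
    apply confined_update_one; simpl; auto.
  - destruct Hp as [-> [E|[r E]]]; inversion E; subst.
    apply confined_update_one; simpl; auto.
  - destruct Hp as [-> [E|[E _]]]; inversion E; subst; split; auto.
  - destruct Hp as [-> [E|[o' [E Hsol]]]]; inversion E; subst.
    assert (Hag := ode_sol_agree _ _ _ _ _ _ Hsol).
    split; simpl; auto.
    + intros y Hy; injection (Hag (VarR y)); auto.
      repeat split; intros Ey; injection Ey as ->; tauto.
    + intros n Hn; injection (Hag (VarN n)); auto.
      repeat split; discriminate.
  - destruct Hp as [[E _]|[-> E]]; inversion E; subst; split; auto.
    intros g Hg; simpl; destruct (Nat.eqb_spec h g) as [->|]; tauto.
  - destruct Hp as [d [[E _]|[-> E]]]; inversion E; subst.
    apply confined_update_one; auto.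
    intros g Hg; simpl; destruct (Nat.eqb_spec h g) as [->|]; tauto.
  - destruct Hp as [Hp|Hp]; [apply (confined_weaken V1)|apply (confined_weaken V2)]; auto.
  - destruct Hp as [[E _]|(t1 & t2 & u & -> & H1 & H2)]; [discriminate|].
    apply (confined_seq V1 V2 v t1 u t2 o); eauto.
    exact (usP_taboo_incl _ _ _ _ _ _ Hus2).
  - destruct Hp as [n Hp]; revert v t o Hp; induction n as [|n IHn];
      intros v t o Hp; simpl in Hp.
    + destruct Hp as [-> [E|E]]; inversion E; subst; split; auto.
    + destruct Hp as [[E _]|(t1 & t2 & u & -> & H1 & H2)]; [discriminate|].
      eapply confined_seq; eauto.
  - exact (confined_par _ _ _ _ _ v t o (IHHus3 v) (IHHus4 v) Hp).
Qed.

Lemma variation_confined U V v w t o :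
  (forall y, U y -> V y) -> (forall h, sT o h = sT v h) ->
  confined V v t o -> variation U v w -> variation V (sapp o t) w.
Proof.
  intros UV Hkeep [HR HN HT] Hvar z Hz.
  assert (HzU : ~ U (SVar z)) by auto.
  specialize (Hvar z HzU).
  destruct z as [x|n|h]; simpl in *.
  - rewrite HR; auto.
  - rewrite HN; auto.
  - rewrite HT, app_nil_r, Hkeep by auto.
    injection Hvar as Ev.
    rewrite <- (tproj_tproj_sub (fun c => ~ V (SChan c)) (fun c => ~ U (SChan c)) (sT v h))
      by auto.
    rewrite Ev; f_equal; apply tproj_tproj_sub; auto.
Qed.

Theorem mainTheorem8 (sg : usubst) (alpha : prog) (U : symset) (I : interp) (w : state)
    (alpha' : prog) (V : symset) (v : state) (tau : rtrace) (o : state) :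
  us_ok sg -> wf_prog false alpha -> interp_ok I ->
  usP sg U (fun _ => False) alpha alpha' V ->
  variation U v w ->
  psem alpha (adjoint sg w I) v tau (Some o) ->
  variation V (sapp o tau) w.
Proof.
  intros _ _ HI Hus Hvar Hrun.
  apply (variation_confined U V v w tau o).
  - exact (usP_taboo_incl _ _ _ _ _ _ Hus).
  - exact (adjoint_keeps_tvars sg w I HI alpha v tau o Hrun).
  - exact (usP_confined sg I w _ _ _ _ _ HI Hus v tau o Hrun).
  - exact Hvar.
Qed.
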